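(* Let $h\in\mathbb{Q}[x]$ be a nonzero $t$-sparse polynomial with nonzero constant term, written $h=a_1+a_2x^{d_2}+\cdots+a_tx^{d_t}$ with $0<d_2<\cdots<d_t$. Suppose the complete factorization of $h$ over $\mathbb{Q}[x]$ is $h=a_th_1^{e_1}\cdots h_k^{e_k}$, with each $h_i$ monic and irreducible and the $h_i$ distinct. Then $\max_i e_i\le t-1$.
   Context: A polynomial is $t$-sparse if it has at most $t$ nonzero coefficients in the power basis. *)

From HB Require Import structures.
From mathcomp Require Import all_boot all_order all_algebra.
Set Implicit Arguments. Unset Strict Implicit. Unset Printing Implicit Defensive.
Import GRing.Theory Num.Theory.
Local Open Scope ring_scope.

Definition sparse {R : nzRingType} (t : nat) (p : {poly R}) : bool :=
  (count (fun c : R => c != 0%R) (polyseq p) <= t)%N.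

From HB Require Import structures.
From mathcomp Require Import all_boot all_order all_algebra.
Import GRing.Theory Num.Theory.
Set Implicit Arguments. Unset Strict Implicit. Unset Printing Implicit Defensive.
Local Open Scope ring_scope.

(* Dividing p by the largest power of X keeps the sparsity and, g being coprime
   to X, the divisibility; then p(0) <> 0, so differentiating kills the constant
   term and leaves a (t-1)-sparse polynomial, still nonzero in characteristic 0,
   divisible by g^(e-1). Induction on t ends at the 0-sparse polynomial 0. *)

Section Sparsity.

Variable R : nzRingType.
Implicit Types p : {poly R}.

Lemma count_coef_neq0 p n : (size p <= n)%N ->
  count (fun c => c != 0) p = count (fun i => p`_i != 0) (iota 0 n).
Proof.
move=> le_p_n; rewrite -(subnKC le_p_n) iotaD count_cat add0n.
rewrite -{1}(mkseq_nth 0 p) count_map -[LHS]addn0; congr (_ + _)%N.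
apply/esym/eqP; rewrite eqn0Ngt -has_count; apply/hasPn => i.
by rewrite mem_iota => /andP[le_p_i _]; rewrite negbK nth_default.
Qed.

Lemma sparse0 p : sparse 0 p = (p == 0).
Proof.
rewrite /sparse leqn0 eqn0Ngt -has_count.
apply/idP/eqP => [/hasPn nz_p | ->]; last by rewrite polyseq0.
apply/eqP/negPn/negP => p_neq0.
suff /nz_p : lead_coef p \in polyseq p by rewrite lead_coef_eq0 p_neq0.
by rewrite mem_nth // ltn_predL lt0n size_poly_eq0.
Qed.

Lemma sparse_mulXn t p n : sparse t (p * 'X^n) = sparse t p.
Proof.
have [-> | p_neq0] := eqVneq p 0; first by rewrite mul0r.
by rewrite /sparse polyseqMXn // -cat_nseq count_cat count_nseq eqxx.
Qed.

Lemma sparse_deriv t p : p`_0 != 0 -> sparse t.+1 p -> sparse t p^`().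
Proof.
move=> p0_neq0; have p_neq0 : p != 0 by apply: contraNneq p0_neq0 => ->; rewrite coef0.
have := lt_size_deriv p_neq0; rewrite /sparse (count_coef_neq0 (leqnn _)).
case: (size p) => // n le_p'_n; rewrite (count_coef_neq0 le_p'_n) /= p0_neq0 ltnS.
apply: leq_trans; rewrite -add1n iotaDl count_map.
by apply: sub_count => i; rewrite coef_deriv; apply: contraNneq => ->; rewrite mul0rn.
Qed.

End Sparsity.

Section CharZeroDomain.

Variable R : idomainType.
Hypothesis R_char0 : has_pchar0 R.
Implicit Types g p : {poly R}.

Lemma deriv_neq0 p : (1 < size p)%N -> p^`() != 0.
Proof.
case def_n: (size p) => [|[|n]] // _; apply/eqP => /polyP/(_ n).
rewrite coef_deriv coef0 => /eqP; rewrite -mulr_natr mulf_eq0 ((pcharf0P R).1 R_char0).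
have lead_p : lead_coef p = p`_n.+1 by rewrite /lead_coef def_n.
by rewrite -lead_p lead_coef_eq0 -size_poly_eq0 def_n.
Qed.

Lemma dvdp_deriv_exp g p e : g ^+ e.+1 %| p -> g ^+ e %| p^`().
Proof.
case/Pdiv.Idomain.dvdpP => [[c q] /= c_neq0 def_cp].
rewrite -(dvdpZr _ _ c_neq0) -derivZ def_cp derivM deriv_exp /= exprSr mulrA.
apply: dvdp_add; first exact: dvdp_mulr (dvdp_mull _ (dvdpp _)).
by rewrite dvdp_mull // -mulrnAr dvdp_mull // -mulr_natr dvdp_mulr.
Qed.

Lemma dvdp_exp_sparse g p e t : (1 < size g)%N -> ~~ root g 0 ->
  p != 0 -> sparse t p -> g ^+ e %| p -> (e < t)%N.
Proof.
move=> g_nconst g0_neq0; elim: t p e => [|t IHt] p e p_neq0.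
  by rewrite sparse0 (negbTE p_neq0).
have [m [q q0_neq0 def_p]] := multiplicity_XsubC p 0.
rewrite p_neq0 implyTb polyC0 subr0 in q0_neq0 def_p; rewrite def_p.
have q_neq0 : q != 0 by apply: contraNneq q0_neq0 => ->; rewrite root0.
rewrite sparse_mulXn Gauss_dvdpl ?coprimep_expl ?coprimep_expr ?coprimepX // => sparse_q.
case: e => // e g_dvd_q; rewrite ltnS.
have g_le_q : (size g <= size q)%N.
  by apply: dvdp_leq q_neq0 (dvdp_trans (dvdp_exp (ltn0Sn e) (dvdpp g)) _).
apply: (IHt _ _ (deriv_neq0 (leq_trans g_nconst g_le_q)) _ (dvdp_deriv_exp g_dvd_q)).
by apply: sparse_deriv sparse_q; rewrite -horner_coef0.
Qed.

End CharZeroDomain.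

Theorem lemma4p1 (t : nat) (h : {poly rat}) (k : nat)
    (hs : 'I_k -> {poly rat}) (e : 'I_k -> nat) :
  h != 0 -> sparse t h -> h`_0 != 0 ->
  (forall i, hs i \is monic) ->
  (forall i, irreducible_poly (hs i)) ->
  injective hs ->
  (forall i, (0 < e i)%N) ->
  h = lead_coef h *: \prod_(i < k) hs i ^+ e i ->
  (\max_(i < k) e i <= t - 1)%N.
Proof.
move=> h_neq0 sparse_h h0_neq0 _ hs_irr _ e_gt0 def_h.
apply/bigmax_leqP => i _.
have hs_dvd_h : hs i ^+ e i %| h.
  by rewrite def_h dvdpZr ?lead_coef_eq0 // (bigD1 i) //= dvdp_mulr.
have hs0_neq0 : ~~ root (hs i) 0.
  apply: contraNN h0_neq0 => /(root_dvdp (dvdp_trans (dvdp_exp2l _ (e_gt0 i)) hs_dvd_h)).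
  by rewrite /root horner_coef0.
have := dvdp_exp_sparse (pchar_num _) (hs_irr i).1 hs0_neq0 h_neq0 sparse_h hs_dvd_h.
by case: t {sparse_h} => // t; rewrite subn1.
Qed.
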